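(* Let $(G,K)$ be a Gelfand pair, $X=G/K$, and let $\Gamma=\sum_{j\in\Lambda}A_j$ be a sum of associates of the $(K\backslash G/K)$-association scheme, where $\Lambda$ indexes some subset of the associates. Then for the $i$th irreducible constituent $V_i$ of $1\uparrow^G_K$, the eigenvalue $\eta_i$ of $\Gamma$ on $V_i$ satisfies \[|\eta_i|\le\sqrt{|X|\,|\Omega_\Lambda|/d_i},\] where $d_i=\dim V_i$ and $\Omega_\Lambda=\bigcup_{j\in\Lambda}\Omega_j$.
   Context: $G$ is a finite group and $K\le G$. $(G,K)$ is a Gelfand pair if the permutation representation $\mathbb{C}[G/K]\cong 1\uparrow^G_K$ is multiplicity-free, $1\uparrow^G_K\cong\bigoplus_{i=1}^m V_i$ with pairwise inequivalent irreducibles $V_i$. The double cosets $KgK$ are indexed by $j$; the sphere $\Omega_j\subseteq X$ is the set of cosets $xK$ with $x$ in the $j$th double coset (equivalently the $K$-orbits on $X$). The associate $A_j$ is the $X\times X$ 0/1 matrix with $(A_j)_{xK,yK}=1$ iff $x^{-1}y$ lies in the $j$th double coset. Each $V_i$ (viewed inside $\mathbb{C}[X]$) is an eigenspace of every $A_j$, and $\eta_i$ is the corresponding eigenvalue of $\Gamma$. *)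

From HB Require Import structures.
From mathcomp Require Import all_boot all_order all_algebra all_fingroup all_field.
Set Implicit Arguments. Unset Strict Implicit. Unset Printing Implicit Defensive.
Import GRing.Theory Num.Theory.
Local Open Scope ring_scope.

Section GelfandDefs.
Variable gT : finGroupType.

Definition cosX (G K : {set gT}) : predArgType :=
  {A : {set gT} | A \in lcosets K G}.

Definition CX (G K : {set gT}) := {ffun cosX G K -> algC^o}.

Definition actX (G K : {set gT}) (g : gT) (A : cosX G K) : cosX G K :=
  insubd A (g *: val A)%g.

Definition gactCX (G K : {set gT}) (g : gT) (f : CX G K) : CX G K :=
  [ffun A => f (actX (g^-1)%g A)].

Definition Ginvariant (G K : {set gT}) (V : {vspace CX G K}) :=
  forall g, g \in G -> forall f, f \in V -> gactCX g f \in V.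

Definition irreducibleG (G K : {set gT}) (V : {vspace CX G K}) :=
  [/\ V != 0%VS, Ginvariant V &
      forall W : {vspace CX G K}, (W <= V)%VS -> Ginvariant W ->
        W = 0%VS \/ W = V].

Definition equivG (G K : {set gT}) (V W : {vspace CX G K}) :=
  exists phi : 'End(CX G K),
    [/\ (phi @: V)%VS = W, (lker phi :&: V)%VS = 0%VS &
        forall g, g \in G -> forall f, f \in V ->
          phi (gactCX g f) = gactCX g (phi f)].

(* The decomposition 1 ↑_K^G = C[X] = ⊕_{i<m} V_i into pairwise inequivalent
   irreducibles; its existence is the Gelfand pair property. *)
Definition multfree_decomposition (G K : {set gT}) (m : nat)
    (Vs : 'I_m -> {vspace CX G K}) :=
  [/\ (\sum_(i < m) Vs i)%VS = fullv, directv (\sum_(i < m) Vs i),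
      forall i, irreducibleG (Vs i) &
      forall i j, i != j -> ~ equivG (Vs i) (Vs j)].


Definition dcosets (G K : {set gT}) : {set {set gT}} :=
  [set (K :* x * K)%g | x in G].

Definition dunion (Lambda : {set {set gT}}) : {set gT} :=
  \bigcup_(D in Lambda) D.

(* Gamma = sum_{j in Lambda} A_j : (Gamma)_{xK,yK} = 1 iff x^-1 y lies in one
   of the double cosets of Lambda (well defined, independent of representatives) *)
Definition Gamma (G K : {set gT}) (Lambda : {set {set gT}}) :
    'M[algC]_#|cosX G K| :=
  \matrix_(a, b) (((repr (val (enum_val a)))^-1 * repr (val (enum_val b)))%g
                     \in dunion Lambda)%:R.

Definition Gamma_act (G K : {set gT}) (Lambda : {set {set gT}}) (f : CX G K)
    : CX G K :=
  [ffun A => \sum_(B : cosX G K)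
     Gamma G K Lambda (enum_rank A) (enum_rank B) * f B].

(* Omega_Lambda = union of the spheres Omega_j, j in Lambda : cosets xK with
   x in one of the double cosets of Lambda *)
Definition OmegaL (G K : {set gT}) (Lambda : {set {set gT}}) : {set cosX G K} :=
  [set A : cosX G K | repr (val A) \in dunion Lambda].

End GelfandDefs.

(* Identify C[X] with row vectors indexed by X; Gamma then acts by the transpose
   M of its 0/1 matrix. Gram-Schmidt turns a basis of V_i into d_i orthonormal
   rows U with U M = eta U, whence d_i |eta|^2 = ||U M||^2 <= ||M||^2 in the
   Frobenius norm, since U has orthonormal rows. Each row xK of Gamma is the
   left translate by x of the indicator of Omega_Lambda (the double cosets are
   stable under right multiplication by K), so ||M||^2 = |X| |Omega_Lambda|. *)

From Pilot Require Import Defs.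
From HB Require Import structures.
From mathcomp Require Import all_boot all_order all_algebra all_fingroup all_field.

Set Implicit Arguments.
Unset Strict Implicit.
Unset Printing Implicit Defensive.

Import Order.TTheory GRing.Theory Num.Theory.
Local Open Scope ring_scope.
Local Open Scope sesquilinear_scope.

Section FrobeniusNorm.
Variable C : numClosedFieldType.

Lemma trmxC_mul m n p (A : 'M[C]_(m, n)) (B : 'M[C]_(n, p)) :
  (A *m B)^t* = B^t* *m A^t*.
Proof. by rewrite trmx_mul map_mxM. Qed.

Lemma mxtrace_mul_trmxC m n (A : 'M[C]_(m, n)) :
  \tr (A *m A^t*) = \sum_i \sum_j `|A i j| ^+ 2.
Proof.
apply: eq_bigr => i _; rewrite mxE; apply: eq_bigr => j _.
by rewrite !mxE normCK.
Qed.

Lemma mxtrace_mul_trmxC_ge0 m n (A : 'M[C]_(m, n)) : 0 <= \tr (A *m A^t*).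
Proof.
rewrite mxtrace_mul_trmxC sumr_ge0 // => i _.
by rewrite sumr_ge0 // => j _; rewrite exprn_ge0.
Qed.

Lemma mxtrace_mul_trmxC_unitary_le d n p (U : 'M[C]_(d, n)) (A : 'M[C]_(n, p)) :
  U \is unitarymx -> \tr (U *m A *m (U *m A)^t*) <= \tr (A *m A^t*).
Proof.
move=> /unitarymxP UU.
(* [Q] projects orthogonally onto the complement of the row space of [U]. *)
pose Q := 1%:M - U^t* *m U.
have QtC : Q^t* = Q.
  by rewrite /Q linearB /= map_mxB trmx1 map_mx1 trmxC_mul trmxCK.
have QQ : Q *m Q = Q.
  rewrite /Q mulmxBl mul1mx mulmxBr mulmx1 mulmxA -(mulmxA _ U) UU mulmx1.
  by rewrite subrr subr0.
have trQA : \tr (Q *m A *m (Q *m A)^t*)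
    = \tr (A *m A^t*) - \tr (U *m A *m (U *m A)^t*).
  rewrite !trmxC_mul QtC !mulmxA mxtrace_mulC !mulmxA QQ.
  rewrite /Q mulmxBl mul1mx mulmxBl linearB /= -!mulmxA.
  by rewrite [X in _ - X]mxtrace_mulC !mulmxA.
by rewrite -subr_ge0 -trQA mxtrace_mul_trmxC_ge0.
Qed.

Lemma eigen_mxtrace_mul_trmxC_ge d n (M : 'M[C]_n) (B : 'M[C]_(d, n)) eta :
  row_free B -> B *m M = eta *: B -> d%:R * `|eta| ^+ 2 <= \tr (M *m M^t*).
Proof.
move=> freeB BM.
have le_dn : (d <= n)%N by rewrite -(eqP freeB) rank_leq_col.
pose U := schmidt B.
have unitU : U \is unitarymx := schmidt_unitarymx B le_dn.
have UM : U *m M = eta *: U.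
  have UB : (U <= B)%MS by rewrite eqmx_schmidt_free.
  by rewrite -{1}(mulmxKpV UB) -[_ *m B *m M]mulmxA BM -scalemxAr mulmxKpV.
have := mxtrace_mul_trmxC_unitary_le M unitU.
rewrite UM linearZ /= map_mxZ -scalemxAl -scalemxAr (unitarymxP unitU).
rewrite !linearZ /= mxtrace1.
by rewrite mulrA -normCK mulrC.
Qed.

End FrobeniusNorm.

Lemma sum_enum_val (T : finType) (R : nmodType) (F : T -> R) :
  \sum_(i < #|T|) F (enum_val i) = \sum_x F x.
Proof. by rewrite -(big_enum_val F). Qed.

Section Coordinates.
Variables (gT : finGroupType) (G K : {set gT}).

Definition coordCX (f : CX G K) : 'rV[algC]_#|cosX G K| :=
  \row_j f (enum_val j).

Fact coordCX_is_linear : linear coordCX.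
Proof. by move=> a f g; apply/rowP => j; rewrite !mxE !ffunE. Qed.

HB.instance Definition _ :=
  GRing.isLinear.Build algC (CX G K) _ _ coordCX coordCX_is_linear.

Lemma coordCX_inj : injective coordCX.
Proof.
move=> f g /rowP fg; apply/ffunP => A.
by have := fg (enum_rank A); rewrite !mxE enum_rankK.
Qed.

Lemma mul_row_coordCX r (fs : 'I_r -> CX G K) (v : 'rV_r) :
  v *m \matrix_k coordCX (fs k) = coordCX (\sum_k v 0 k *: fs k).
Proof.
rewrite linear_sum mulmx_sum_row; apply: eq_bigr => k _.
by rewrite linearZ rowK.
Qed.

Lemma row_free_coordCX_vbasis (V : {vspace CX G K}) :
  row_free (\matrix_(k < \dim V) coordCX (vbasis V)`_k).
Proof.
apply/inj_row_free => v; rewrite mul_row_coordCX -(linear0 coordCX).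
move=> /coordCX_inj v0.
have /freeP freeV := basis_free (vbasisP V).
by apply/rowP => k; rewrite mxE (freeV (v 0) v0).
Qed.

Lemma coordCX_Gamma_act (Lambda : {set {set gT}}) f :
  coordCX (Gamma_act Lambda f) = coordCX f *m (Gamma G K Lambda)^T.
Proof.
apply/rowP => j; rewrite !mxE ffunE -[LHS]sum_enum_val.
by apply: eq_bigr => l _; rewrite !mxE !enum_valK mulrC.
Qed.

End Coordinates.

Section Cosets.
Variables (gT : finGroupType) (G K : {group gT}).
Hypothesis sKG : K \subset G.

Lemma cosX_reprK (A : cosX G K) : (repr (val A) *: K)%g = val A.
Proof.
have /lcosetsP [y _ ->] := valP A.
by apply/lcoset_eqP; exact: mem_repr (lcoset_refl K y).
Qed.

Lemma cosX_repr_in (A : cosX G K) : repr (val A) \in G.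
Proof.
have /lcosetsP [y yG ->] := valP A.
have /lcosetP [k kK ->] := mem_repr _ (lcoset_refl K y).
by rewrite groupM // (subsetP sKG).
Qed.

Lemma val_actX g (A : cosX G K) :
  g \in G -> val (Defs.actX g A) = (g *: val A)%g.
Proof.
move=> gG; rewrite /Defs.actX val_insubd ifT // -(cosX_reprK A) -lcosetM.
by apply/lcosetsP; exists (g * repr (val A))%g; rewrite ?groupM ?cosX_repr_in.
Qed.

Lemma actX_inj g : g \in G -> injective (@Defs.actX gT G K g).
Proof.
by move=> gG A B /(congr1 val); rewrite !val_actX // => /lcoset_inj /val_inj.
Qed.

Variable Lambda : {set {set gT}}.
Hypothesis sLambda : Lambda \subset dcosets G K.

Lemma dunion_mulgK z k :
  k \in K -> (z * k \in dunion Lambda)%g = (z \in dunion Lambda).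
Proof.
suff mulK z' k' :
    k' \in K -> z' \in dunion Lambda -> (z' * k')%g \in dunion Lambda.
  move=> kK; apply/idP/idP => [|]; last exact: mulK.
  by move/(mulK _ k^-1%g); rewrite groupV mulgK; apply.
move=> kK /bigcupP [D DL zD]; apply/bigcupP; exists D => //.
have /imsetP [x _ eD] := subsetP sLambda D DL; rewrite eD in zD *.
by case/mulsgP: zD => a b aK bK ->; rewrite -mulgA mem_mulg ?groupM.
Qed.

Lemma mem_OmegaL_actX x (A : cosX G K) : x \in G ->
  (Defs.actX x A \in OmegaL G K Lambda)
    = (x * repr (val A) \in dunion Lambda)%g.
Proof.
move=> xG; set y := repr (val A).
rewrite inE val_actX // -(cosX_reprK A) -/y -lcosetM.
have /lcosetP [k kK ->] := mem_repr _ (lcoset_refl K (x * y)%g).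
exact: dunion_mulgK.
Qed.

Lemma card_OmegaL_translate x : x \in G ->
  #|[set A : cosX G K | x^-1 * repr (val A) \in dunion Lambda]%g|
    = #|OmegaL G K Lambda|.
Proof.
move=> xG; rewrite -[RHS](card_preimset _ (actX_inj (groupVr xG))).
by apply: eq_card => A; rewrite in_set -mem_OmegaL_actX ?groupV // [RHS]in_set.
Qed.

Lemma mxtrace_Gamma_trmxC :
  \tr ((Gamma G K Lambda)^T *m (Gamma G K Lambda)^T^t*)
    = #|cosX G K|%:R * #|OmegaL G K Lambda|%:R.
Proof.
rewrite mulr_natl -[in RHS](card_ord #|cosX G K|) -sumr_const.
rewrite mxtrace_mul_trmxC exchange_big /=; apply: eq_bigr => j _.
rewrite -(card_OmegaL_translate (cosX_repr_in (enum_val j))).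
rewrite -sum1_card natr_sum.
rewrite [RHS]big_mkcond -[RHS]sum_enum_val; apply: eq_bigr => i _.
by rewrite !mxE inE; case: (_ \in _); rewrite ?normr1 ?normr0 ?expr1n ?expr0n.
Qed.

End Cosets.

Lemma norm_le_sqrtC_div (e x : algC) d :
  (0 < d)%N -> d%:R * `|e| ^+ 2 <= x -> `|e| <= sqrtC (x / d%:R).
Proof.
move=> d_gt0 le_ex; rewrite -(sqrCK (normr_ge0 e)).
rewrite ler_sqrtC ?ler_pdivlMr ?ltr0n//.
- by rewrite mulrC.
- by rewrite qualifE /= exprn_ge0.
by rewrite qualifE /= divr_ge0 // (le_trans _ le_ex) // mulr_ge0 // exprn_ge0.
Qed.

Theorem mainTheorem18 (gT : finGroupType) (G K : {group gT})
    (m : nat) (Vs : 'I_m -> {vspace CX G K})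
    (sKG : K \subset G) (decV : multfree_decomposition Vs)
    (Lambda : {set {set gT}}) (sLambda : Lambda \subset dcosets G K)
    (i : 'I_m) (eta : algC)
    (eigen : forall f, f \in Vs i -> Gamma_act Lambda f = eta *: f) :
  `|eta| <= sqrtC (#|cosX G K|%:R * #|OmegaL G K Lambda|%:R
                    / (\dim (Vs i))%:R).
Proof.
case: decV => _ _ irrV _; have [Vi_neq0 _ _] := irrV i.
pose B := \matrix_(k < \dim (Vs i)) coordCX (vbasis (Vs i))`_k.
have BGamma : B *m (Gamma G K Lambda)^T = eta *: B.
  apply/row_matrixP => k; rewrite row_mul linearZ /= !rowK -coordCX_Gamma_act.
  by rewrite eigen ?linearZ // vbasis_mem // mem_nth // size_tuple.
have := eigen_mxtrace_mul_trmxC_ge (row_free_coordCX_vbasis (Vs i)) BGamma.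
rewrite mxtrace_Gamma_trmxC //; apply: norm_le_sqrtC_div.
by rewrite lt0n dimv_eq0.
Qed.
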